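(* Let $\mathcal N_{Y_1\cdots Y_K\mid X}$ and $\widetilde{\mathcal N}_{Y_1\cdots Y_K\mid X}$ be two discrete memoryless $K$-user broadcast channels with the same input alphabet and output alphabets, whose marginals coincide: $\mathcal N_{Y_k\mid X}=\widetilde{\mathcal N}_{Y_k\mid X}$ for all $k\in[K]$, where $\mathcal N_{Y_k\mid X}(y_k\mid x)=\sum_{(y_l)_{l\ne k}}\mathcal N(y_1,\dots,y_K\mid x)$. Then for any NS-assisted (or classical) coding scheme over $n$ channel uses, the error probability of the $k$-th message is the same when the scheme is used over $\mathcal N$ as when it is used over $\widetilde{\mathcal N}$, i.e. $P_{e,k}=\widetilde P_{e,k}$ for every $k\in[K]$.
   Context: A discrete memoryless $K$-user BC has input alphabet $\mathcal X$, output alphabets $\mathcal Y_k$ and transition law $\mathcal N(y_1,\dots,y_K\mid x)$, with $n$ uses given by $\mathcal N^{\otimes n}(y^{[n]}_{[K]}\mid x^{[n]})=\prod_{\tau=1}^n\mathcal N(y_1^{(\tau)},\dots,y_K^{(\tau)}\mid x^{(\tau)})$. Messages $W_1,\dots,W_K$ are independent, $W_k$ uniform on a finite nonempty set $\mathcal M_k$. A classical scheme: stochastic encoder $X^{[n]}=\phi(W_1,\dots,W_K)$ and stochastic decoders $\hat W_k=\psi_k(Y_k^{[n]})$. A $\kappa$-partite NS box is a conditional pmf $\mathcal Z(b_1,\dots,b_\kappa\mid a_1,\dots,a_\kappa)$ (finite output alphabets) such that for every subset of parties, the marginal of their outputs given all inputs depends only on their inputs. An NS-assisted scheme: a $(K+1)$-partite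 NS box where the transmitter inputs $(W_1,\dots,W_K)$ and obtains $U\in\mathcal X^n$, transmitting $X^{[n]}=U$; Rx-$k$ inputs $Y_k^{[n]}$ and obtains $\hat W_k\in\mathcal M_k$; joint law $\Pr(w,x^{[n]},y^{[n]}_{[K]},\hat w)=\frac{1}{\prod_k|\mathcal M_k|}\mathcal Z(x^{[n]},\hat w_{[K]}\mid w_{[K]},y^{[n]}_{[K]})\mathcal N^{\otimes n}(y^{[n]}_{[K]}\mid x^{[n]})$. The error probability of message $k$ is $P_{e,k}=\Pr(\hat W_k\ne W_k)$ ($\widetilde P_{e,k}$ over $\widetilde{\mathcal N}$). *)

From HB Require Import structures.
From mathcomp Require Import all_boot all_order all_algebra.
Set Implicit Arguments. Unset Strict Implicit. Unset Printing Implicit Defensive.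
Import Order.TTheory GRing.Theory Num.Theory.
Local Open Scope ring_scope.

Section BC.
Variable R : realFieldType.

Definition is_channel (K : nat) (X : finType) (Y : 'I_K -> finType)
    (N : X -> {dffun forall k : 'I_K, Y k} -> R) : Prop :=
  (forall x y, 0 <= N x y) /\ (forall x, \sum_y N x y = 1).

Definition bc_marginal (K : nat) (X : finType) (Y : 'I_K -> finType)
    (N : X -> {dffun forall k : 'I_K, Y k} -> R) (k : 'I_K) (x : X) (yk : Y k) : R :=
  \sum_(y : {dffun forall l : 'I_K, Y l} | y k == yk) N x y.

Definition out_at (K n : nat) (Y : 'I_K -> finType)
    (y : {dffun forall k : 'I_K, {ffun 'I_n -> Y k}}) (tau : 'I_n)
    : {dffun forall k : 'I_K, Y k} :=
  @finfun _ (fun k => Y k) (fun k => y k tau).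

Definition bc_n (K n : nat) (X : finType) (Y : 'I_K -> finType)
    (N : X -> {dffun forall k : 'I_K, Y k} -> R)
    (x : {ffun 'I_n -> X}) (y : {dffun forall k : 'I_K, {ffun 'I_n -> Y k}}) : R :=
  \prod_(tau < n) N (x tau) (out_at y tau).

Definition is_NS_box (P : finType) (A B : P -> finType)
    (Z : {dffun forall p : P, A p} -> {dffun forall p : P, B p} -> R) : Prop :=
  [/\ (forall a b, 0 <= Z a b),
      (forall a, \sum_b Z a b = 1) &
      (forall (S : {set P}) (a a' : {dffun forall p : P, A p})
              (b : {dffun forall p : P, B p}),
         (forall p, p \in S -> a p = a' p) ->
         \sum_(b' : {dffun forall p : P, B p} | [forall p in S, b' p == b p]) Z a b'
         = \sum_(b' : {dffun forall p : P, B p} | [forall p in S, b' p == b p]) Z a' b')].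

(* The (K+1)-partite box of an NS-assisted scheme: party None is the
   transmitter (input (W_1..W_K), output U in X^n), party Some k is Rx-k
   (input Y_k^[n], output hat W_k in M k). *)
Definition ns_in (K n : nat) (M Y : 'I_K -> finType) (p : option 'I_K) : finType :=
  match p with
  | None => {dffun forall k : 'I_K, M k}
  | Some k => {ffun 'I_n -> Y k}
  end.

Definition ns_out (K n : nat) (X : finType) (M : 'I_K -> finType) (p : option 'I_K)
    : finType :=
  match p with
  | None => {ffun 'I_n -> X}
  | Some k => M k
  end.

Definition rx_inputs (K n : nat) (M Y : 'I_K -> finType)
    (a : {dffun forall p : option 'I_K, ns_in n M Y p})
    : {dffun forall k : 'I_K, {ffun 'I_n -> Y k}} :=
  @finfun _ (fun k => {ffun 'I_n -> Y k}) (fun k => a (Some k)).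

Definition num_messages (K : nat) (M : 'I_K -> finType) : R :=
  (\prod_(k < K) #|M k|)%:R.

Definition ns_error (K n : nat) (X : finType) (Y M : 'I_K -> finType)
    (N : X -> {dffun forall k : 'I_K, Y k} -> R)
    (Z : {dffun forall p : option 'I_K, ns_in n M Y p} ->
         {dffun forall p : option 'I_K, ns_out n X M p} -> R)
    (k : 'I_K) : R :=
  (num_messages M)^-1 *
  \sum_(a : {dffun forall p : option 'I_K, ns_in n M Y p})
  \sum_(b : {dffun forall p : option 'I_K, ns_out n X M p})
     (b (Some k) != (a None : {dffun forall l : 'I_K, M l}) k)%:R
     * Z a b * bc_n N (b None) (rx_inputs a).

(* Stochastic encoder phi w x = Pr(X^[n] = x | W = w), stochastic decoders
   psi k y w' = Pr(hat W_k = w' | Y_k^[n] = y). *)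
Definition is_classical_scheme (K n : nat) (X : finType) (Y M : 'I_K -> finType)
    (phi : {dffun forall k : 'I_K, M k} -> {ffun 'I_n -> X} -> R)
    (psi : forall k : 'I_K, {ffun 'I_n -> Y k} -> M k -> R) : Prop :=
  [/\ (forall w x, 0 <= phi w x), (forall w, \sum_x phi w x = 1),
      (forall k y w', 0 <= psi k y w') & (forall k y, \sum_w' psi k y w' = 1)].

Definition classical_error (K n : nat) (X : finType) (Y M : 'I_K -> finType)
    (N : X -> {dffun forall k : 'I_K, Y k} -> R)
    (phi : {dffun forall k : 'I_K, M k} -> {ffun 'I_n -> X} -> R)
    (psi : forall k : 'I_K, {ffun 'I_n -> Y k} -> M k -> R)
    (k : 'I_K) : R :=
  (num_messages M)^-1 *
  \sum_(w : {dffun forall l : 'I_K, M l})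
  \sum_(x : {ffun 'I_n -> X})
  \sum_(y : {dffun forall l : 'I_K, {ffun 'I_n -> Y l}})
  \sum_(w' : M k)
     (w' != w k)%:R * phi w x * bc_n N x y * psi k (y k) w'.

End BC.

Arguments bc_marginal {R K X Y} N k x yk.

(* Summing the product channel over the outputs of every receiver but [k]
   leaves the product of the single-letter marginals [N_{Y_k|X}], so the
   expectation of any function of [y_k^[n]] alone is the same over [N] and
   [Nt].  Once the messages and the transmitted [x^[n]] are fixed, the error
   of message [k] is such an expectation: for a classical scheme because the
   decoder of Rx-k only sees [y_k^[n]], for an NS box because the probability
   that the transmitter outputs [x^[n]] and Rx-k decides wrongly is the
   marginal of the parties {Tx, Rx-k}, which by non-signaling does not depend
   on the inputs of the other receivers. *)

From HB Require Import structures.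
From mathcomp Require Import all_boot all_order all_algebra ring.
Import Order.TTheory GRing.Theory Num.Theory.
Local Open Scope ring_scope.
Set Implicit Arguments. Unset Strict Implicit.

Lemma eq_sum_mul_fibre (R : pzRingType) (T U : finType) (key : T -> U)
    (G F1 F2 : T -> R) :
  (forall t t', key t = key t' -> G t = G t') ->
  (forall t, \sum_(t' | key t' == key t) F1 t' = \sum_(t' | key t' == key t) F2 t') ->
  \sum_t G t * F1 t = \sum_t G t * F2 t.
Proof.
move=> G_key eqF.
rewrite (partition_big key predT) // [RHS](partition_big key predT) //=.
apply: eq_bigr => u _.
case: (pickP [pred t | key t == u]) => [t0 /eqP key_t0 | fibre0]; last first.
  by rewrite !big_pred0 // => t; rewrite fibre0.
have G_t0 t : key t == u -> G t = G t0 by move=> /eqP key_t; apply: G_key; rewrite key_t.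
rewrite (eq_bigr (fun t => G t0 * F1 t)); last by move=> t /G_t0 ->.
rewrite [RHS](eq_bigr (fun t => G t0 * F2 t)); last by move=> t /G_t0 ->.
by rewrite -!mulr_sumr -key_t0 eqF.
Qed.

Section NonSignalingBox.
Variables (R : realFieldType) (P : finType) (A B : P -> finType).

Definition restrict (S : {set P}) (b : {dffun forall p : P, B p})
  : {dffun forall p : P, option (B p)} :=
  @finfun P (fun p => option (B p)) (fun p => if p \in S then Some (b p) else None).

Lemma eq_restrict (S : {set P}) (b b' : {dffun forall p : P, B p}) :
  (restrict S b == restrict S b') = [forall p in S, b p == b' p].
Proof.
apply/eqP/forall_inP => [eq_b p pS | eq_b].
  by move/ffunP/(_ p): eq_b; rewrite !ffunE pS => -[->].
by apply/ffunP => p; rewrite !ffunE; case: ifP => // /eq_b /eqP ->.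
Qed.

Lemma ns_box_sum_local
    (Z : {dffun forall p : P, A p} -> {dffun forall p : P, B p} -> R)
    (S : {set P}) (g : {dffun forall p : P, B p} -> R)
    (a a' : {dffun forall p : P, A p}) :
  is_NS_box Z -> (forall p, p \in S -> a p = a' p) ->
  (forall b b' : {dffun forall p : P, B p},
     (forall p, p \in S -> b p = b' p) -> g b = g b') ->
  \sum_b g b * Z a b = \sum_b g b * Z a' b.
Proof.
case=> _ _ ns_Z eq_a g_local.
apply: (@eq_sum_mul_fibre R _ _ (restrict S) g (Z a) (Z a')) => [b b' /eqP | b].
  by rewrite eq_restrict => /forall_inP eq_b; apply: g_local => p /eq_b /eqP.
under eq_bigl => b' do rewrite eq_restrict.
under [RHS]eq_bigl => b' do rewrite eq_restrict.
exact: ns_Z.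
Qed.

End NonSignalingBox.

Section ProductChannel.
Variables (R : realFieldType) (K n : nat) (X : finType) (Y : 'I_K -> finType).

Local Notation outputs := {dffun forall k : 'I_K, {ffun 'I_n -> Y k}}.

Definition outputs_of_uses (f : {ffun 'I_n -> {dffun forall k : 'I_K, Y k}})
  : outputs :=
  @finfun _ (fun k => {ffun 'I_n -> Y k}) (fun k => [ffun t => f t k]).

Lemma outputs_of_usesK : cancel outputs_of_uses (fun y => [ffun t => out_at y t]).
Proof. by move=> f; apply/ffunP => t; apply/ffunP => k; rewrite !ffunE. Qed.

Lemma out_atK : cancel (fun y => [ffun t => out_at y t]) outputs_of_uses.
Proof. by move=> y; apply/ffunP => k; apply/ffunP => t; rewrite !ffunE. Qed.

Lemma bc_n_marginal (N : X -> {dffun forall k : 'I_K, Y k} -> R)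
    (x : {ffun 'I_n -> X}) (k : 'I_K) (yk : {ffun 'I_n -> Y k}) :
  \sum_(y : outputs | y k == yk) bc_n N x y = \prod_t bc_marginal N k (x t) (yk t).
Proof.
rewrite /bc_marginal bigA_distr_big_dep (reindex outputs_of_uses); last first.
  by exists (fun y => [ffun t => out_at y t]) => y _; [apply: outputs_of_usesK | apply: out_atK].
apply: eq_big => [f | f _].
  apply/eqP/familyP => [<- t | eq_f]; first by rewrite !ffunE unfold_in.
  by apply/ffunP => t; rewrite !ffunE; have := eq_f t; rewrite unfold_in => /eqP.
by apply: eq_bigr => t _; congr (N _ _); apply/ffunP => l; rewrite !ffunE.
Qed.

Lemma bc_n_sum_local (N Nt : X -> {dffun forall k : 'I_K, Y k} -> R) (k : 'I_K)
    (x : {ffun 'I_n -> X}) (h : outputs -> R) :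
  (forall (x : X) (yk : Y k), bc_marginal N k x yk = bc_marginal Nt k x yk) ->
  (forall y y' : outputs, y k = y' k -> h y = h y') ->
  \sum_y bc_n N x y * h y = \sum_y bc_n Nt x y * h y.
Proof.
move=> eq_marg h_local.
under eq_bigr do rewrite mulrC.
under [RHS]eq_bigr do rewrite mulrC.
apply: (@eq_sum_mul_fibre R _ _ (fun y : outputs => y k) h) => // y.
by rewrite !bc_n_marginal; apply: eq_bigr => t _; apply: eq_marg.
Qed.

Variable M : 'I_K -> finType.

Local Notation messages := {dffun forall k : 'I_K, M k}.
Local Notation box_in := {dffun forall p : option 'I_K, ns_in n M Y p}.
Local Notation box_out := {dffun forall p : option 'I_K, ns_out n X M p}.

Definition box_input (w : messages) (y : outputs) : box_in :=
  @finfun (option 'I_K) (ns_in n M Y)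
    (fun p => match p return ns_in n M Y p with None => w | Some l => y l end).

Lemma box_inputK (w : messages) (y : outputs) :
  box_input w y None = w /\ rx_inputs (box_input w y) = y.
Proof. by split; [rewrite ffunE | apply/ffunP => l; rewrite !ffunE]. Qed.

Lemma box_input_bij : bijective (fun wy : messages * outputs => box_input wy.1 wy.2).
Proof.
exists (fun a : box_in => (a None : messages, rx_inputs a)) => [[w y] | a] /=.
  by have [-> ->] := box_inputK w y.
by apply/ffunP => -[l|]; rewrite !ffunE.
Qed.

Lemma sum_box_input (F : box_in -> R) :
  \sum_a F a = \sum_(w : messages) \sum_(y : outputs) F (box_input w y).
Proof. by rewrite pair_bigA (reindex _ (onW_bij _ box_input_bij)). Qed.

Definition ns_wrong_decision_weight (Z : box_in -> box_out -> R) (k : 'I_K)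
    (w : messages) (x : {ffun 'I_n -> X}) (y : outputs) : R :=
  \sum_(b : box_out) ((b None == x) && (b (Some k) != w k))%:R * Z (box_input w y) b.

Lemma ns_wrong_decision_weight_local (Z : box_in -> box_out -> R) (k : 'I_K)
    (w : messages) (x : {ffun 'I_n -> X}) (y y' : outputs) :
  is_NS_box Z -> y k = y' k ->
  ns_wrong_decision_weight Z k w x y = ns_wrong_decision_weight Z k w x y'.
Proof.
move=> ns_Z eq_yk; apply: (ns_box_sum_local (S := [set None; Some k])) => //.
  by move=> p; rewrite !inE => /orP[] /eqP ->; rewrite !ffunE.
by move=> b b' eq_b; rewrite !eq_b // !inE eqxx ?orbT.
Qed.

Lemma ns_error_by_channel (N : X -> {dffun forall k : 'I_K, Y k} -> R)
    (Z : box_in -> box_out -> R) (k : 'I_K) :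
  ns_error N Z k = (num_messages R M)^-1 *
    \sum_(w : messages) \sum_(x : {ffun 'I_n -> X}) \sum_(y : outputs)
      bc_n N x y * ns_wrong_decision_weight Z k w x y.
Proof.
rewrite /ns_error sum_box_input; congr (_ * _).
apply: eq_bigr => w _; rewrite [RHS]exchange_big; apply: eq_bigr => y _.
have [-> ->] := box_inputK w y.
rewrite (partition_big (fun b : box_out => b None) predT) //=.
apply: eq_bigr => x _; rewrite /ns_wrong_decision_weight mulr_sumr big_mkcond /=.
apply: eq_bigr => b _; case: eqP => [-> | _]; last by rewrite mul0r mulr0.
by rewrite /= mulrC.
Qed.

Lemma classical_error_by_channel (N : X -> {dffun forall k : 'I_K, Y k} -> R)
    (phi : messages -> {ffun 'I_n -> X} -> R)
    (psi : forall k : 'I_K, {ffun 'I_n -> Y k} -> M k -> R) (k : 'I_K) :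
  classical_error N phi psi k = (num_messages R M)^-1 *
    \sum_(w : messages) \sum_(x : {ffun 'I_n -> X}) \sum_(y : outputs)
      bc_n N x y * (phi w x * \sum_(w' : M k) (w' != w k)%:R * psi k (y k) w').
Proof.
rewrite /classical_error; congr (_ * _).
do 3 (apply: eq_bigr => ? _); rewrite !mulr_sumr; apply: eq_bigr => w' _; ring.
Qed.

End ProductChannel.

Theorem theorem2 (R : realFieldType) (K n : nat) (X : finType)
    (Y M : 'I_K -> finType)
    (N Nt : X -> {dffun forall k : 'I_K, Y k} -> R) :
  (forall k : 'I_K, (0 < #|M k|)%N) ->
  is_channel N -> is_channel Nt ->
  (forall (k : 'I_K) (x : X) (yk : Y k), bc_marginal N k x yk = bc_marginal Nt k x yk) ->
  (forall Z : {dffun forall p : option 'I_K, ns_in n M Y p} ->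
              {dffun forall p : option 'I_K, ns_out n X M p} -> R,
     is_NS_box Z -> forall k : 'I_K, ns_error N Z k = ns_error Nt Z k) /\
  (forall (phi : {dffun forall k : 'I_K, M k} -> {ffun 'I_n -> X} -> R)
          (psi : forall k : 'I_K, {ffun 'I_n -> Y k} -> M k -> R),
     is_classical_scheme phi psi ->
     forall k : 'I_K, classical_error N phi psi k = classical_error Nt phi psi k).
Proof.
move=> _ _ _ eq_marg; split=> [Z ns_Z k | phi psi _ k].
  rewrite !ns_error_by_channel; congr (_ * _).
  apply: eq_bigr => w _; apply: eq_bigr => x _.
  by apply: bc_n_sum_local (eq_marg k) _ => y y'; apply: ns_wrong_decision_weight_local.
rewrite !classical_error_by_channel; congr (_ * _).
apply: eq_bigr => w _; apply: eq_bigr => x _.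
by apply: bc_n_sum_local (eq_marg k) _ => y y' ->.
Qed.
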